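(* Let $W\in\mathbb{R}^{m\times n}$ have nonzero columns $w_1,\dots,w_n$, $F:=WW^\top$, $r:=\operatorname{rank}(W)\ge1$, $\ell_i:=w_i^\top F^+w_i$, $D_i:=\|w_i\|^4/(w_i^\top Fw_i)$ and $\sigma_i:=1-D_i/\ell_i$. Assume $\sum_{i=1}^nD_i\ge(1-\varepsilon)r$. Then for every $\tau\in(0,1)$, $$\frac1r\sum_{i:\sigma_i\ge\tau}\ell_i\le\frac{\varepsilon}{\tau}.$$
   Context: $F^+$ is the Moore–Penrose pseudoinverse of $F$. *)

From HB Require Import structures.
From mathcomp Require Import all_boot all_order all_algebra.
From mathcomp Require Import reals.
Set Implicit Arguments. Unset Strict Implicit. Unset Printing Implicit Defensive.
Import Order.TTheory GRing.Theory Num.Theory.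
Local Open Scope ring_scope.

(* Moore-Penrose pseudoinverse of a real matrix A : 'M_(p,q): X : 'M_(q,p)
   satisfying the four Penrose conditions (transpose = adjoint over R).
   Such an X exists and is unique. *)
Definition is_MP_pinv (R : realType) (p q : nat) (A : 'M[R]_(p, q)) (X : 'M[R]_(q, p)) : Prop :=
  [/\ A *m X *m A = A, X *m A *m X = X, (A *m X)^T = A *m X & (X *m A)^T = X *m A].

Definition qform (R : realType) (m : nat) (u : 'cV[R]_m) (M : 'M[R]_m) (v : 'cV[R]_m) : R :=
  (u^T *m M *m v) 0 0.

Definition sqnorm (R : realType) (m : nat) (u : 'cV[R]_m) : R := (u^T *m u) 0 0.

From HB Require Import structures.
From mathcomp Require Import all_boot all_order all_algebra.
From mathcomp Require Import reals ring.
Set Implicit Arguments. Unset Strict Implicit. Unset Printing Implicit Defensive.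
Import Order.TTheory GRing.Theory Num.Theory.
Local Open Scope ring_scope.

(* F F^+ is the orthogonal projection onto the column space of W, so it fixes
   every column w_i.  Cauchy-Schwarz for the vectors W^T w_i and W^T F^+ w_i
   then reads ||w_i||^4 <= (w_i^T F w_i) (w_i^T F^+ w_i), i.e. D_i <= l_i and
   sigma_i >= 0.  The leverages l_i sum to tr (F^+ F) = rank (F^+ F) <= r, so
   sum_i sigma_i l_i = sum_i l_i - sum_i D_i <= eps r, and Markov's inequality
   for the weights l_i bounds the l-mass of {i | sigma_i >= tau} by eps r / tau. *)

Lemma mxtrace_idem (F : fieldType) n (P : 'M[F]_n) :
  P *m P = P -> \tr P = (\rank P)%:R.
Proof.
move=> PP; have [X XC1] := row_fullP (col_base_full P).
have [B' BB'1] := row_freeP (row_base_free P).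
have CBCB := PP; rewrite -(mulmx_base P) in CBCB.
have BC1 : row_base P *m col_base P = 1%:M.
  (* abstract the factors so that mulmxA cannot reassociate inside them *)
  move: XC1 BB'1 CBCB; move: (col_base P) (row_base P) => C B XC1 BB'1 CBCB.
  have := congr1 (fun M => X *m M *m B') CBCB.
  by rewrite /= !mulmxA XC1 mul1mx -!mulmxA BB'1 mulmx1.
by rewrite -{1}(mulmx_base P) mxtrace_mulC BC1 mxtrace1.
Qed.

Section RealGram.
Variable R : realFieldType.

Lemma gram_diagE p q (M : 'M[R]_(p, q)) i : (M *m M^T) i i = \sum_j M i j ^+ 2.
Proof. by rewrite mxE; apply: eq_bigr => j _; rewrite mxE expr2. Qed.

Lemma gram_diag_ge0 p q (M : 'M[R]_(p, q)) i : 0 <= (M *m M^T) i i.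
Proof. by rewrite gram_diagE sumr_ge0 // => j _; rewrite sqr_ge0. Qed.

Lemma gram_diag_eq0 p q (M : 'M[R]_(p, q)) i : (M *m M^T) i i = 0 -> row i M = 0.
Proof.
rewrite gram_diagE => /eqP; rewrite psumr_eq0 => [/allP M0|j _]; last exact: sqr_ge0.
by apply/rowP => j; rewrite !mxE; apply/eqP; rewrite -sqrf_eq0; exact: M0 (mem_index_enum j).
Qed.

Lemma gram_eq0 p q (M : 'M[R]_(p, q)) : M *m M^T = 0 -> M = 0.
Proof.
move=> MMt0; apply/row_matrixP => i; rewrite row0.
by apply: gram_diag_eq0; rewrite MMt0 mxE.
Qed.

Definition dotcv k (u v : 'cV[R]_k) : R := (u^T *m v) 0 0.

Lemma dotcvC k (u v : 'cV[R]_k) : dotcv u v = dotcv v u.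
Proof. by rewrite /dotcv -trace_mx11 -mxtrace_tr trmx_mul trmxK trace_mx11. Qed.

Lemma dotcv_ge0 k (u : 'cV[R]_k) : 0 <= dotcv u u.
Proof. by rewrite /dotcv -{2}[u]trmxK gram_diag_ge0. Qed.

Lemma dotcv_eq0 k (u : 'cV[R]_k) : (dotcv u u == 0) = (u == 0).
Proof.
apply/eqP/eqP => [|->]; last by rewrite /dotcv mulmx0 mxE.
rewrite /dotcv -{2}[u]trmxK => /gram_diag_eq0/rowP u0.
by apply/colP => j; have := u0 j; rewrite !mxE.
Qed.

Lemma dotcv_gt0 k (u : 'cV[R]_k) : u != 0 -> 0 < dotcv u u.
Proof. by rewrite lt_def dotcv_ge0 dotcv_eq0 andbT. Qed.

Lemma dotcv_sumE k (u v : 'cV[R]_k) : dotcv u v = \sum_j u j 0 * v j 0.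
Proof. by rewrite /dotcv mxE; apply: eq_bigr => j _; rewrite mxE. Qed.

Lemma cauchy_schwarz_cv k (u v : 'cV[R]_k) :
  dotcv u v ^+ 2 <= dotcv u u * dotcv v v.
Proof.
have [->|v0] := eqVneq v 0; first by rewrite /dotcv !mulmx0 mxE expr0n mulr0.
set a := dotcv u u; set b := dotcv u v; set c := dotcv v v.
have expand x y : \sum_j (x * u j 0 - y * v j 0) ^+ 2
                  = x ^+ 2 * a - 2 * x * y * b + y ^+ 2 * c.
  rewrite /a /b /c !dotcv_sumE !mulr_sumr -sumrB -big_split /=.
  by apply: eq_bigr => j _; ring.
have : 0 <= \sum_j (c * u j 0 - b * v j 0) ^+ 2.
  by apply: sumr_ge0 => j _; exact: sqr_ge0.
rewrite expand (_ : _ + _ = c * (c * a - b ^+ 2)); last by ring.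
by rewrite pmulr_rge0 ?dotcv_gt0 // subr_ge0 mulrC.
Qed.

Variables (m n : nat) (W : 'M[R]_(m, n)) (Fp : 'M[R]_m).
Let F := W *m W^T.

Lemma pinv_gram_range :
  F *m Fp *m F = F -> (F *m Fp)^T = F *m Fp -> F *m Fp *m W = W.
Proof.
move=> FFpF FFp_sym; apply/eqP; rewrite -subr_eq0; apply/eqP/gram_eq0.
rewrite linearB /= trmx_mul -mulmxA FFp_sym mulmxBl !mulmxBr !mulmxA.
by rewrite -/F -[F *m Fp *m W *m W^T]mulmxA -/F FFpF subrr.
Qed.

End RealGram.

Section Leverage.
Variables (R : realType) (m n : nat) (W : 'M[R]_(m, n)) (Fp : 'M[R]_m).
Let F := W *m W^T.

Lemma sum_qform_col (M : 'M[R]_m) :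
  \sum_(i < n) qform (col i W) M (col i W) = \tr (W^T *m M *m W).
Proof.
apply: eq_bigr => i _.
by rewrite /qform tr_col rowE colE !mulmxA -colE -!mulmxA -rowE !mxE.
Qed.

Lemma sum_leverage_le_rank :
  Fp *m F *m Fp = Fp -> \sum_(i < n) qform (col i W) Fp (col i W) <= (\rank W)%:R.
Proof.
move=> FpFFp; rewrite sum_qform_col -mulmxA mxtrace_mulC -mulmxA.
rewrite -/F mxtrace_idem; last by rewrite mulmxA FpFFp.
by rewrite ler_nat (leq_trans (mxrankM_maxr _ _)) ?mxrankM_maxl.
Qed.

Variable w : 'cV[R]_m.
Hypothesis FFpw : F *m Fp *m w = w.

Let z := W^T *m w.
Let y := W^T *m Fp *m w.

Let dot_zz : dotcv z z = qform w F w.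
Proof. by rewrite /dotcv /qform /z /F trmx_mul trmxK !mulmxA. Qed.

Let dot_zy : dotcv z y = sqnorm w.
Proof. by rewrite /dotcv /z /y trmx_mul trmxK -!mulmxA (mulmxA W) -/F (mulmxA F) FFpw. Qed.

Let dot_yy : dotcv y y = qform w Fp w.
Proof.
rewrite /dotcv /y !trmx_mul trmxK -!mulmxA (mulmxA W) -/F (mulmxA F) FFpw.
by rewrite mulmxA -trmx_mul -/(dotcv (Fp *m w) w) dotcvC /dotcv /qform mulmxA.
Qed.

Lemma leverage_cauchy_schwarz : sqnorm w ^+ 2 <= qform w F w * qform w Fp w.
Proof. by rewrite -dot_zz -dot_yy -dot_zy cauchy_schwarz_cv. Qed.

Lemma leverage_gt0 : w != 0 -> 0 < qform w Fp w.
Proof.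
move=> w0; rewrite -dot_yy dotcv_gt0 //; apply: contraNneq w0 => y0.
by rewrite -FFpw /F -!mulmxA (mulmxA W^T) -/y y0 !mulmx0.
Qed.

Lemma gram_ratio_le_leverage : w != 0 -> sqnorm w ^+ 2 / qform w F w <= qform w Fp w.
Proof.
move=> w0; have w4_gt0 : 0 < sqnorm w ^+ 2 by rewrite exprn_gt0 ?dotcv_gt0.
have qF_gt0 : 0 < qform w F w.
  rewrite lt_def -dot_zz dotcv_ge0 andbT; apply: contraTneq w4_gt0 => qF0.
  by rewrite -leNgt (le_trans leverage_cauchy_schwarz) // -dot_zz qF0 mul0r.
by rewrite ler_pdivrMr // mulrC leverage_cauchy_schwarz.
Qed.

End Leverage.

Lemma markov_sum (R : numDomainType) (I : finType) (a s : I -> R) (t : R) :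
  (forall i, 0 <= a i) -> (forall i, 0 <= s i * a i) ->
  t * \sum_(i | t <= s i) a i <= \sum_i s i * a i.
Proof.
move=> a_ge0 sa_ge0; rewrite mulr_sumr [X in _ <= X](bigID (fun i => t <= s i)) /=.
rewrite ler_wpDr ?sumr_ge0 //.
by apply: ler_sum => i t_le_s; rewrite ler_wpM2r.
Qed.

Lemma leverage_tail_le (R : realFieldType) (I : finType) (ell D : I -> R) (r eps tau : R) :
  (forall i, 0 < ell i) -> (forall i, D i <= ell i) ->
  \sum_i ell i <= r -> (1 - eps) * r <= \sum_i D i -> 0 < r -> 0 < tau ->
  r^-1 * \sum_(i | tau <= 1 - D i / ell i) ell i <= eps / tau.
Proof.
move=> ell_gt0 D_le_ell sum_ell sum_D r_gt0 tau_gt0.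
have sigma_ell i : (1 - D i / ell i) * ell i = ell i - D i.
  by rewrite mulrBl mul1r mulfVK ?gt_eqF.
have tail_le : tau * \sum_(i | tau <= 1 - D i / ell i) ell i
                <= \sum_i (1 - D i / ell i) * ell i.
  by apply: markov_sum => i; rewrite ?sigma_ell ?subr_ge0 // ltW.
have mass_le : \sum_i (1 - D i / ell i) * ell i <= eps * r.
  under eq_bigr do rewrite sigma_ell.
  rewrite sumrB lerBlDr (le_trans sum_ell) // (le_trans _ (lerD (lexx _) sum_D)) //.
  by rewrite mulrBl mul1r addrC subrK.
rewrite ler_pdivrMl // mulrA ler_pdivlMr // mulrC [r * eps]mulrC.
exact: le_trans tail_le mass_le.
Qed.

Theorem mainTheorem18 (R : realType) (m n : nat) (W : 'M[R]_(m, n))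
    (Fp : 'M[R]_m) (eps tau : R) :
  (forall i : 'I_n, col i W != 0) ->
  (0 < \rank W)%N ->
  is_MP_pinv (W *m W^T) Fp ->
  let F := W *m W^T in
  let r := (\rank W)%:R : R in
  let ell := fun i : 'I_n => qform (col i W) Fp (col i W) in
  let D := fun i : 'I_n => (sqnorm (col i W)) ^+ 2 / qform (col i W) F (col i W) in
  let sigma := fun i : 'I_n => 1 - D i / ell i in
  \sum_(i < n) D i >= (1 - eps) * r ->
  0 < tau < 1 ->
  r^-1 * \sum_(i < n | tau <= sigma i) ell i <= eps / tau.
Proof.
(* the bound holds for every [tau > 0] *)
move=> col_neq0 rank_gt0 [FFpF FpFFp FFp_sym _] F r ell D sigma sum_D /andP[tau_gt0 _].
have FFp_col i : F *m Fp *m col i W = col i W.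
  by rewrite !colE mulmxA pinv_gram_range.
apply: leverage_tail_le => //.
- by move=> i; exact: leverage_gt0 (FFp_col i) (col_neq0 i).
- by move=> i; exact: gram_ratio_le_leverage (FFp_col i) (col_neq0 i).
- exact: sum_leverage_le_rank.
- by rewrite ltr0n.
Qed.
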